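(* Let $p\in(0,1)$ and $0<\alpha<\frac{p}{1-p}$. Let $E:\mathbb{R}_{\ge0}\to\mathbb{R}_{\ge0}$ satisfy: (i) $E$ is a proper error score; (ii) the limits $\lim_{x\to\infty}\frac{E'(x)}{E(x)}$, $\lim_{x\to\infty}\frac{E(x)}{E(ax)}$ and $\lim_{x\to\infty}\frac{E'(x)}{E'(ax)}$ exist (in the extended reals) for every $a\in(0,1)$; (iii) $-\log E(x)\in\omega(\log x)$ as $x\to\infty$, i.e. $\frac{-\log E(x)}{\log x}\to\infty$. Then $E$ is undulating (with respect to $p,\alpha$).
   Context: A proper error score is a function $E:\mathbb{R}_{\ge0}\to\mathbb{R}_{\ge0}$ that is twice differentiable, with $E(x)>0$ and $E'(x)<0$ for all $x\ge0$, $E(0)=c_0>0$, and $\lim_{x\to\infty}E(x)=0$. Given $p\in(0,1)$ and $0<\alpha<\frac{p}{1-p}$, an error score $E$ is undulating if there exist $z_1,z_2\in\mathbb{R}$ such that $\frac{E'(pm)}{E'(\alpha(1-p)m)}>\frac{\alpha(1-p)}{p}$ for all $m\ge 0$ with $m<z_1$, and $\frac{E'(pm)}{E'(\alpha(1-p)m)}<\frac{\alpha(1-p)}{p}$ for all $m>z_2$. *)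

From Stdlib Require Import Reals.
From Coquelicot Require Import Coquelicot.
Open Scope R_scope.

Definition is_deriv_nonneg (f f' : R -> R) : Prop :=
  forall x, 0 <= x ->
    filterlim (fun y => (f y - f x) / (y - x))
      (within (fun y => 0 <= y /\ y <> x) (locally x)) (locally (f' x)).

Definition proper_error_score (E E' : R -> R) : Prop :=
  is_deriv_nonneg E E' /\
  (exists E'' : R -> R, is_deriv_nonneg E' E'') /\
  (forall x, 0 <= x -> 0 < E x) /\
  (forall x, 0 <= x -> E' x < 0) /\
  0 < E 0 /\
  filterlim E (Rbar_locally p_infty) (locally 0).

Definition undulating (p alpha : R) (E' : R -> R) : Prop :=
  exists z1 z2 : R,
    (forall m, 0 <= m -> m < z1 ->
       E' (p * m) / E' (alpha * (1 - p) * m) > alpha * (1 - p) / p) /\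
    (forall m, 0 <= m -> z2 < m ->
       E' (p * m) / E' (alpha * (1 - p) * m) < alpha * (1 - p) / p).

Definition ex_lim_pinfty_Rbar (g : R -> R) : Prop :=
  exists l : Rbar, filterlim g (Rbar_locally p_infty) (Rbar_locally l).

(* Write b = alpha (1 - p) / p, which lies in (0, 1); the ratio to study is
   E'(t) / E'(b t) with t = p m.  Near 0 it is close to E'(0) / E'(0) = 1 > b.
   At infinity it has a limit; if that limit were >= b, the ratio would
   eventually exceed b/2, and integrating E'(t) <= (b/2) E'(b t) gives
   E(t) >= E(b t) / 2 eventually.  Then -ln E grows by at most ln 2 each time
   its argument is multiplied by 1/b, so -ln E(x) = O(ln x), contradicting
   -ln E(x) / ln x -> +oo.  Hence the ratio is eventually below b. *)

From Stdlib Require Import Reals Lra Lia.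
From Coquelicot Require Import Coquelicot.
Open Scope R_scope.

Lemma ball_R (x e y : R) : ball x e y -> Rabs (y - x) < e.
Proof. intros H; exact H. Qed.

Lemma is_deriv_nonneg_quotient (f f' : R -> R) (x eps : R) :
  is_deriv_nonneg f f' -> 0 <= x -> 0 < eps ->
  exists d, 0 < d /\ forall y, 0 <= y -> y <> x -> Rabs (y - x) < d ->
    Rabs ((f y - f x) / (y - x) - f' x) < eps.
Proof.
  intros Hd Hx Heps.
  destruct (Hd x Hx _ (locally_ball (f' x) (mkposreal eps Heps))) as [d Hd'].
  exists d; split; [apply cond_pos |].
  intros y Hy Hyx Hyd. exact (Hd' y Hyd (conj Hy Hyx)).
Qed.

Lemma is_deriv_nonneg_derivable_pt_lim (f f' : R -> R) (x : R) :
  is_deriv_nonneg f f' -> 0 < x -> derivable_pt_lim f x (f' x).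
Proof.
  intros Hd Hx eps Heps.
  destruct (is_deriv_nonneg_quotient f f' x eps Hd (Rlt_le _ _ Hx) Heps) as [d [Hd0 Hq]].
  assert (Hm : 0 < Rmin d x) by (apply Rmin_pos; lra).
  exists (mkposreal _ Hm); intros h Hh0 Hh; simpl in Hh.
  pose proof (Rmin_l d x); pose proof (Rmin_r d x).
  pose proof (proj1 (Rabs_lt_between h (Rmin d x)) Hh).
  specialize (Hq (x + h) ltac:(lra) ltac:(lra)).
  replace (x + h - x) with h in Hq by ring.
  apply Hq; lra.
Qed.

Lemma is_deriv_nonneg_continuous (f f' : R -> R) (x eps : R) :
  is_deriv_nonneg f f' -> 0 <= x -> 0 < eps ->
  exists d, 0 < d /\ forall y, 0 <= y -> Rabs (y - x) < d -> Rabs (f y - f x) < eps.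
Proof.
  intros Hd Hx Heps.
  destruct (is_deriv_nonneg_quotient f f' x 1 Hd Hx Rlt_0_1) as [d [Hd0 Hq]].
  set (k := Rabs (f' x) + 1).
  assert (Hk : 0 < k) by (unfold k; pose proof (Rabs_pos (f' x)); lra).
  exists (Rmin d (eps / k)); split.
  { apply Rmin_pos; [lra | apply Rdiv_lt_0_compat; lra]. }
  intros y Hy Hyx.
  pose proof (Rmin_l d (eps / k)); pose proof (Rmin_r d (eps / k)).
  destruct (Req_dec y x) as [-> | Hne].
  { rewrite Rminus_diag, Rabs_R0; lra. }
  specialize (Hq y Hy Hne ltac:(lra)).
  assert (Hslope : Rabs ((f y - f x) / (y - x)) < k).
  { unfold k. pose proof (Rabs_triang_inv ((f y - f x) / (y - x)) (f' x)). lra. }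
  assert (Hyx0 : 0 < Rabs (y - x)) by (apply Rabs_pos_lt; lra).
  replace (f y - f x) with ((f y - f x) / (y - x) * (y - x)) by (field; lra).
  rewrite Rabs_mult.
  apply Rle_lt_trans with (k * Rabs (y - x)).
  { apply Rmult_le_compat_r; lra. }
  apply Rlt_le_trans with (k * (eps / k)); [apply Rmult_lt_compat_l; lra |].
  right; field; lra.
Qed.

Lemma nonincreasing_of_derivative_nonpos (f f' : R -> R) (a : R) :
  (forall x, a <= x -> derivable_pt_lim f x (f' x)) ->
  (forall x, a <= x -> f' x <= 0) ->
  forall x y, a <= x -> x <= y -> f y <= f x.
Proof.
  intros Hd Hn x y Hx Hxy.
  destruct (MVT_gen f x y f') as [c [Hc Heq]].
  - intros z Hz; rewrite Rmin_left in Hz by lra.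
    apply is_derive_Reals, Hd; lra.
  - intros z Hz; rewrite Rmin_left in Hz by lra.
    apply derivable_continuous_pt; exists (f' z); apply Hd; lra.
  - rewrite Rmin_left, Rmax_right in Hc by lra.
    assert (f' c * (y - x) <= 0) by (apply Rmult_le_0_r; [apply Hn |]; lra).
    lra.
Qed.

Lemma nonincreasing_lim_0_nonneg (h : R -> R) (X : R) :
  (forall x y, X <= x -> x <= y -> h y <= h x) ->
  filterlim h (Rbar_locally p_infty) (locally 0) ->
  forall x, X <= x -> 0 <= h x.
Proof.
  intros Hmono Hlim x Hx.
  destruct (Rle_or_lt 0 (h x)) as [Hpos | Hneg]; [exact Hpos | exfalso].
  assert (Heps : 0 < - h x) by lra.
  destruct (proj1 (filterlim_locally _ _) Hlim (mkposreal _ Heps)) as [M HM].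
  set (y := Rmax x M + 1).
  pose proof (Rmax_l x M); pose proof (Rmax_r x M).
  specialize (HM y ltac:(unfold y; lra)).
  apply ball_R, Rabs_lt_between in HM; simpl in HM.
  specialize (Hmono x y Hx ltac:(unfold y; lra)).
  lra.
Qed.

(* Iterating [g y <= g (b y) + K] down to the base interval [X, X/b] takes
   about [ln (y/X) / ln (1/b)] steps. *)
Lemma le_ln_of_geometric_increment (g : R -> R) (b K X : R) :
  0 < b < 1 -> 0 < X -> 0 <= K ->
  (forall x y, X <= x -> x <= y -> g x <= g y) ->
  (forall y, X <= b * y -> g y <= g (b * y) + K) ->
  forall y, X <= y -> g y <= g (X / b) + K * (ln y - ln X) / - ln b.
Proof.
  intros Hb HX HK Hmono Hstep.
  assert (Hlnb : 0 < - ln b) by (pose proof (ln_increasing b 1); rewrite ln_1 in *; lra).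
  set (B := fun y => g (X / b) + K * (ln y - ln X) / - ln b).
  assert (HXb : X <= X / b).
  { apply (Rmult_le_reg_l b); [lra |]. replace (b * (X / b)) with X by (field; lra). nra. }
  assert (Hbase : forall y, X <= y -> y <= X / b -> g y <= B y).
  { intros y H1 H2. unfold B.
    assert (0 <= K * (ln y - ln X) / - ln b).
    { apply Rmult_le_pos; [apply Rmult_le_pos | left; apply Rinv_0_lt_compat]; [lra | | lra].
      pose proof (ln_le X y HX H1); lra. }
    pose proof (Hmono y (X / b) H1 H2). lra. }
  assert (Hiter : forall n y, X <= y -> y <= X / b ^ S n -> g y <= B y).
  { induction n as [| n IH]; intros y H1 H2.
    - apply Hbase; [exact H1 |]. simpl in H2; rewrite Rmult_1_r in H2; exact H2.
    - destruct (Rle_or_lt y (X / b)) as [Hy | Hy]; [apply Hbase; assumption |].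
      assert (Hby : X <= b * y).
      { assert (b * (X / b) = X) by (field; lra). nra. }
      assert (Hby' : b * y <= X / b ^ S n).
      { assert (0 < b ^ n) by (apply pow_lt; lra).
        assert (b * (X / b ^ S (S n)) = X / b ^ S n) by (simpl; field; lra).
        nra. }
      specialize (IH _ Hby Hby').
      assert (B (b * y) = B y - K) by (unfold B; rewrite ln_mult by lra; field; lra).
      pose proof (Hstep y Hby). lra. }
  intros y Hy.
  destruct (pow_lt_1_zero b ltac:(rewrite Rabs_pos_eq; lra) (X / y)
              ltac:(apply Rdiv_lt_0_compat; lra)) as [N HN].
  specialize (HN (S N) ltac:(lia)).
  assert (HbN : 0 < b ^ S N) by (apply pow_lt; lra).
  rewrite Rabs_pos_eq in HN by lra.
  apply (Hiter N); [exact Hy |].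
  apply (Rmult_le_reg_r (b ^ S N)); [exact HbN |].
  replace (X / b ^ S N * b ^ S N) with X by (field; lra).
  apply (Rmult_lt_compat_r y) in HN; [| lra].
  replace (X / y * y) with X in HN by (field; lra).
  lra.
Qed.

Lemma not_div_ln_pinfty_of_le_ln (g : R -> R) (C K X : R) :
  (forall y, X <= y -> g y <= C + K * ln y) ->
  ~ filterlim (fun x => g x / ln x) (Rbar_locally p_infty) (Rbar_locally p_infty).
Proof.
  intros Hle Hlim.
  set (M := Rabs C + Rabs K + 1).
  destruct (Hlim (fun r => M < r) (ex_intro _ M (fun r Hr => Hr))) as [N HN].
  set (y := Rmax N (Rmax X (exp 1)) + 1).
  pose proof (Rmax_l N (Rmax X (exp 1))); pose proof (Rmax_r N (Rmax X (exp 1))).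
  pose proof (Rmax_l X (exp 1)); pose proof (Rmax_r X (exp 1)).
  assert (Hlny : 1 < ln y).
  { rewrite <- ln_exp at 1. apply ln_increasing; [apply exp_pos | unfold y; lra]. }
  specialize (HN y ltac:(unfold y; lra)); simpl in HN.
  apply (Rmult_lt_compat_r (ln y)) in HN; [| lra].
  replace (g y / ln y * ln y) with (g y) in HN by (field; lra).
  specialize (Hle y ltac:(unfold y; lra)).
  pose proof (Rle_abs C); pose proof (Rle_abs K); pose proof (Rabs_pos C).
  assert (K * ln y <= Rabs K * ln y) by (apply Rmult_le_compat_r; lra).
  unfold M in HN. nra.
Qed.

Lemma ex_lim_pinfty_eventually_lt_or_gt (g : R -> R) (a b : R) :
  ex_lim_pinfty_Rbar g -> a < b ->
  (exists X, forall t, X < t -> g t < b) \/ (exists X, forall t, X < t -> a < g t).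
Proof.
  intros [[l | |] Hl] Hab.
  - destruct (Rlt_or_le l b) as [Hlb | Hal].
    + left. apply (Hl (fun r => r < b)).
      exists (mkposreal (b - l) ltac:(lra)); intros r Hr.
      apply ball_R, Rabs_lt_between in Hr; simpl in Hr; lra.
    + right. apply (Hl (fun r => a < r)).
      exists (mkposreal (b - a) ltac:(lra)); intros r Hr.
      apply ball_R, Rabs_lt_between in Hr; simpl in Hr; lra.
  - right. apply (Hl (fun r => a < r)). exists a; auto.
  - left. apply (Hl (fun r => r < b)). exists b; auto.
Qed.

Lemma filterlim_scale_pinfty (b : R) : 0 < b ->
  filterlim (fun t => b * t) (Rbar_locally p_infty) (Rbar_locally p_infty).
Proof.
  intros Hb P [M HM]. exists (M / b). intros t Ht. apply HM.
  apply (Rmult_lt_compat_l b) in Ht; [| exact Hb].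
  replace (b * (M / b)) with M in Ht by (field; lra). exact Ht.
Qed.

Section ProperErrorScore.

Variables E E' : R -> R.
Hypothesis HE : proper_error_score E E'.

Lemma score_derivable (x : R) : 0 < x -> derivable_pt_lim E x (E' x).
Proof. apply is_deriv_nonneg_derivable_pt_lim, HE. Qed.

Lemma score_pos (x : R) : 0 <= x -> 0 < E x.
Proof. apply HE. Qed.

Lemma score_deriv_neg (x : R) : 0 <= x -> E' x < 0.
Proof. apply HE. Qed.

Lemma score_nonincreasing (x y : R) : 0 < x -> x <= y -> E y <= E x.
Proof.
  intros Hx Hxy.
  apply (nonincreasing_of_derivative_nonpos E E' x); [| | lra | lra].
  - intros t Ht; apply score_derivable; lra.
  - intros t Ht; left; apply score_deriv_neg; lra.
Qed.

Lemma score_lim_0 : filterlim E (Rbar_locally p_infty) (locally 0).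
Proof. apply HE. Qed.

(* If E' t exceeds c E' (b t) eventually, then E t - (c/b) E (b t) has a
   nonpositive derivative there and tends to 0, hence stays nonnegative. *)
Lemma score_ratio_lower_bound (b c X : R) : 0 < b < 1 -> 0 < c ->
  (forall t, X < t -> E' t / E' (b * t) > c) ->
  exists X', 0 < X' /\ forall t, X' <= t -> c / b * E (b * t) <= E t.
Proof.
  intros Hb Hc Hratio.
  set (X' := Rmax X 1 + 1).
  pose proof (Rmax_l X 1); pose proof (Rmax_r X 1).
  exists X'; split; [unfold X'; lra |].
  set (h := fun t => E t - c / b * E (b * t)).
  assert (Hh' : forall t, X' <= t -> derivable_pt_lim h t (E' t - c * E' (b * t))).
  { intros t Ht. apply is_derive_Reals.
    assert (D1 : is_derive E t (E' t)).
    { apply is_derive_Reals, score_derivable; unfold X' in Ht; lra. }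
    assert (D2 : is_derive E (b * t) (E' (b * t))).
    { apply is_derive_Reals, score_derivable; unfold X' in Ht; nra. }
    assert (D3 : is_derive (fun s => b * s) t b) by (auto_derive; [exact I | ring]).
    pose proof (is_derive_minus _ _ t _ _ D1
                  (is_derive_scal _ t (c / b) _ (is_derive_comp E _ t _ _ D2 D3))) as D.
    replace (E' t - c * E' (b * t))
      with (minus (E' t) (c / b * scal b (E' (b * t)))).
    - exact D.
    - unfold minus, plus, opp, scal; simpl; unfold mult; simpl; field; lra. }
  assert (Hh'_nonpos : forall t, X' <= t -> E' t - c * E' (b * t) <= 0).
  { intros t Ht.
    pose proof (Hratio t ltac:(unfold X' in Ht; lra)) as Hrt.
    assert (Hn : E' (b * t) < 0) by (apply score_deriv_neg; unfold X' in Ht; nra).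
    assert (E' t = E' t / E' (b * t) * E' (b * t)) by (field; lra).
    nra. }
  assert (Hlim : filterlim h (Rbar_locally p_infty) (locally 0)).
  { assert (Hcomp : is_lim (fun t => E (b * t)) p_infty 0).
    { eapply filterlim_comp; [apply filterlim_scale_pinfty; lra | apply score_lim_0]. }
    pose proof (is_lim_minus' _ _ _ _ _ (score_lim_0 : is_lim E p_infty 0)
                  (is_lim_scal_l _ (c / b) _ _ Hcomp)) as L.
    simpl in L. replace (0 - c / b * 0) with 0 in L by ring. exact L. }
  intros t Ht.
  pose proof (nonincreasing_lim_0_nonneg h X'
                (nonincreasing_of_derivative_nonpos h _ X' Hh' Hh'_nonpos) Hlim t Ht).
  unfold h in *; lra.
Qed.

Lemma score_neg_ln_le_ln (b d X : R) : 0 < b < 1 -> 0 < d -> 0 < X ->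
  (forall t, X <= t -> d * E (b * t) <= E t) ->
  exists C K, forall y, X <= y -> - ln (E y) <= C + K * ln y.
Proof.
  intros Hb Hd HX Hratio.
  assert (Hstep : forall y, X <= b * y -> - ln (E y) <= - ln (E (b * y)) + Rabs (ln d)).
  { intros y Hy.
    assert (Hy' : X <= y) by nra.
    assert (HEby : 0 < E (b * y)) by (apply score_pos; lra).
    pose proof (ln_le _ _ (Rmult_lt_0_compat _ _ Hd HEby) (Hratio y Hy')) as Hln.
    rewrite ln_mult in Hln by lra.
    pose proof (Rle_abs (- ln d)); rewrite Rabs_Ropp in *; lra. }
  assert (Hmono : forall x y, X <= x -> x <= y -> - ln (E x) <= - ln (E y)).
  { intros x y Hx Hxy.
    pose proof (ln_le _ _ (score_pos y ltac:(lra)) (score_nonincreasing x y ltac:(lra) Hxy)).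
    lra. }
  pose proof (le_ln_of_geometric_increment (fun y => - ln (E y)) b (Rabs (ln d)) X
                Hb HX (Rabs_pos _) Hmono Hstep) as Hbound.
  assert (Hlnb : 0 < - ln b) by (pose proof (ln_increasing b 1); rewrite ln_1 in *; lra).
  exists (- ln (E (X / b)) - Rabs (ln d) * ln X / - ln b), (Rabs (ln d) / - ln b).
  intros y Hy. specialize (Hbound y Hy); simpl in Hbound.
  replace (- ln (E (X / b)) - Rabs (ln d) * ln X / - ln b + Rabs (ln d) / - ln b * ln y)
    with (- ln (E (X / b)) + Rabs (ln d) * (ln y - ln X) / - ln b) by (field; lra).
  exact Hbound.
Qed.

(* By continuity of E' at 0 the ratio is close to E' 0 / E' 0 = 1 there. *)
Lemma score_deriv_ratio_gt_near_0 (b : R) : 0 < b < 1 ->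
  exists d, 0 < d /\
    forall u v, 0 <= u -> 0 <= v -> u < d -> v < d -> E' u / E' v > b.
Proof.
  intros Hb.
  destruct HE as [_ [[E'' HE''] _]].
  set (c := - E' 0).
  assert (Hc : 0 < c) by (unfold c; pose proof (score_deriv_neg 0 (Rle_refl 0)); lra).
  set (eps := c * (1 - b) / (1 + b)).
  assert (Heps : 0 < eps).
  { unfold eps; apply Rdiv_lt_0_compat; [apply Rmult_lt_0_compat |]; lra. }
  destruct (is_deriv_nonneg_continuous E' E'' 0 eps HE'' (Rle_refl 0) Heps) as [d [Hd Hcont]].
  exists d; split; [exact Hd |].
  intros u v Hu Hv Hud Hvd.
  assert (Hu' : - E' u > c - eps).
  { pose proof (Hcont u Hu ltac:(rewrite Rminus_0_r, Rabs_pos_eq; lra)) as Hcu.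
    apply Rabs_lt_between in Hcu; unfold c; lra. }
  assert (Hv' : - E' v < c + eps).
  { pose proof (Hcont v Hv ltac:(rewrite Rminus_0_r, Rabs_pos_eq; lra)) as Hcv.
    apply Rabs_lt_between in Hcv; unfold c; lra. }
  assert (Hbal : c - eps = b * (c + eps)) by (unfold eps; field; lra).
  pose proof (score_deriv_neg v Hv).
  replace (E' u / E' v) with (- E' u / - E' v) by (field; lra).
  apply Rlt_gt, (Rmult_lt_reg_r (- E' v)); [lra |].
  replace (- E' u / - E' v * - E' v) with (- E' u) by (field; lra).
  nra.
Qed.

End ProperErrorScore.

Theorem theorem2 (p alpha : R) (E E' : R -> R)
  (Hp : 0 < p < 1)
  (Halpha : 0 < alpha < p / (1 - p))
  (HE : proper_error_score E E')
  (Hlim1 : ex_lim_pinfty_Rbar (fun x => E' x / E x))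
  (Hlim2 : forall a, 0 < a < 1 -> ex_lim_pinfty_Rbar (fun x => E x / E (a * x)))
  (Hlim3 : forall a, 0 < a < 1 -> ex_lim_pinfty_Rbar (fun x => E' x / E' (a * x)))
  (Hgrowth : filterlim (fun x => - ln (E x) / ln x)
               (Rbar_locally p_infty) (Rbar_locally p_infty)) :
  undulating p alpha E'.
Proof.
  set (b := alpha * (1 - p) / p).
  assert (Hb : 0 < b < 1).
  { assert (alpha * (1 - p) < p).
    { replace p with (p / (1 - p) * (1 - p)) at 2 by (field; lra). nra. }
    unfold b; split; [apply Rdiv_lt_0_compat; nra |].
    apply (Rmult_lt_reg_r p); [lra |].
    replace (alpha * (1 - p) / p * p) with (alpha * (1 - p)) by (field; lra). lra. }
  assert (Hscale : forall m, alpha * (1 - p) * m = b * (p * m)) by (intros; unfold b; field; lra).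
  destruct (ex_lim_pinfty_eventually_lt_or_gt _ (b / 2) b (Hlim3 b Hb) ltac:(lra))
    as [[X Hbelow] | [X Habove]].
  - destruct (score_deriv_ratio_gt_near_0 E E' HE b Hb) as [d [Hd Hnear]].
    exists (d / p), (X / p); fold b; split; intros m Hm Hmz; rewrite Hscale.
    + assert (p * m < d) by (apply (Rmult_lt_compat_l p) in Hmz; [field_simplify in Hmz |]; lra).
      assert (0 <= p * m) by nra.
      apply Hnear; [lra | nra | lra | nra].
    + apply Hbelow. apply (Rmult_lt_compat_l p) in Hmz; [field_simplify in Hmz |]; lra.
  - exfalso.
    destruct (score_ratio_lower_bound E E' HE b (b / 2) X Hb ltac:(lra) Habove)
      as [X' [HX' Hratio]].
    destruct (score_neg_ln_le_ln E E' HE b (b / 2 / b) X' Hb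
                ltac:(apply Rdiv_lt_0_compat; lra) HX' Hratio) as [C [K Hbound]].
    exact (not_div_ln_pinfty_of_le_ln _ C K X' Hbound Hgrowth).
Qed.
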